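(* Let $\Delta=\prod_{1\le i<j\le n}(x_i-x_j)$ and, for $0\le k\le n-1$ and $n-1\ge m_1>m_2>\dots>m_k\ge1$, let $\omega_{m_1,\dots,m_k}=d_{m_1}d_{m_2}\cdots d_{m_k}\Delta\in\Omega_n$ (with $\omega=\Delta$ when $k=0$). Then $\omega_{m_1,\dots,m_k}\in H_{\binom n2-\sum_i m_i,\,k}$ and $\sigma\omega_{m_1,\dots,m_k}=\mathrm{sgn}(\sigma)\omega_{m_1,\dots,m_k}$ for all $\sigma\in S_n$.
   Context: $\Omega_n=\mathbb{R}[x_1,\dots,x_n]\otimes\wedge\mathbb{R}^n$, with $S_n$ permuting indices of the $x_i$ and $dx_i$ simultaneously. With $\partial_i=\partial/\partial x_i$: $d_j(h\,dx_{i_1}\wedge\cdots\wedge dx_{i_k})=\sum_l(\partial_l^jh)\,dx_l\wedge dx_{i_1}\wedge\cdots\wedge dx_{i_k}$ and $\delta_l(h\,dx_{i_1}\wedge\cdots\wedge dx_{i_k})=\sum_j(\partial_j^lh)\,\iota(dx_j)(dx_{i_1}\wedge\cdots\wedge dx_{i_k})$, where $\iota(dx_j)$ is contraction ($0$ if $j\notin\{i_1<\dots<i_k\}$, $(-1)^{r-1}dx_{i_1}\wedge\cdots\widehat{dx_{i_r}}\cdots\wedge dx_{i_k}$ if $j=i_r$). A polynomial $f$ is $S_n$-harmonic if $\sum_i\partial_i^kf=0$ for $k=1,\dots,n$. $H_{r,s}$ is the space of $s$-forms $\sum_{i_1<\dots<i_s}h_{i_1\dots i_s}dx_{i_1}\wedge\cdots\wedge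 dx_{i_s}$ with every $h_{i_1\dots i_s}$ $S_n$-harmonic and homogeneous of degree $r$, and annihilated by $\delta_j$ for $j=0,\dots,n-1$. *)

From HB Require Import structures.
From mathcomp Require Import all_boot all_order all_algebra all_fingroup.
From mathcomp Require Import reals.
From mathcomp Require Import mpoly.
Set Implicit Arguments. Unset Strict Implicit. Unset Printing Implicit Defensive.
Import Order.TTheory GRing.Theory Num.Theory.
Local Open Scope ring_scope.

(* Omega_n = R[x_1..x_n] (x) wedge R^n, over a real field R (the paper: R = reals).
   A form is stored by its coefficients: the coefficient of
   dx_{i_1} /\ ... /\ dx_{i_k} (i_1 < ... < i_k) is [w I] with I = {i_1,...,i_k}.
   Indices are 0-based: x_i for i : 'I_n. *)
Definition form (R : nzRingType) (n : nat) := {ffun {set 'I_n} -> {mpoly R[n]}}.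

Definition dpow (R : nzRingType) n (i : 'I_n) (k : nat) (p : {mpoly R[n]}) :
  {mpoly R[n]} := iter k (mderiv i) p.

Definition fmapf (R : nzRingType) n (f : {mpoly R[n]} -> {mpoly R[n]})
  (w : form R n) : form R n := [ffun I => f (w I)].

(* left exterior multiplication by dx_l:
   dx_l /\ dx_I = 0 if l \in I, else (-1)^#{i in I | i < l} dx_{I u {l}} *)
Definition wedge_dx (R : nzRingType) n (l : 'I_n) (w : form R n) : form R n :=
  [ffun T : {set 'I_n} => if l \in T
             then (-1) ^+ #|[set i in T | (i < l)%N]| * w (T :\ l) else 0].

(* contraction iota(dx_j):
   iota(dx_j) dx_I = 0 if j \notin I, (-1)^(r-1) dx_{I \ {j}} if j = i_r,
   where r-1 = #{i in I | i < j} *)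
Definition contr_dx (R : nzRingType) n (j : 'I_n) (w : form R n) : form R n :=
  [ffun T : {set 'I_n} => if j \in T then 0
             else (-1) ^+ #|[set i in T | (i < j)%N]| * w (j |: T)].

Definition dop (R : nzRingType) n (j : nat) (w : form R n) : form R n :=
  \sum_(l < n) wedge_dx l (fmapf (dpow l j) w).

Definition deltaop (R : nzRingType) n (l : nat) (w : form R n) : form R n :=
  \sum_(j < n) contr_dx j (fmapf (dpow j l) w).

Definition Sn_harmonic (R : nzRingType) n (f : {mpoly R[n]}) : Prop :=
  forall k : nat, (1 <= k <= n)%N -> \sum_(i < n) dpow i k f = 0.

Definition in_H (R : nzRingType) n (r s : nat) (w : form R n) : Prop :=
  [/\ (forall I : {set 'I_n}, #|I| != s -> w I = 0),
      (forall I : {set 'I_n}, Sn_harmonic (w I) /\ w I \is r.-homog)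
    & (forall j : nat, (j < n)%N -> deltaop j w = 0)].

(* action of sigma in S_n: x_i |-> x_{sigma i}, dx_i |-> dx_{sigma i}.
   h dx_{i_1} /\ ... /\ dx_{i_k} |-> (sigma h) dx_{sigma i_1} /\ ... /\ dx_{sigma i_k};
   reordering the wedge into increasing order contributes the sign
   (-1)^(number of inversions of sigma on I). *)
Definition act_form (R : nzRingType) n (s : 'S_n) (w : form R n) : form R n :=
  \sum_(I : {set 'I_n})
    [ffun T : {set 'I_n} => if T == s @: I then
       (-1) ^+ #|[set p : 'I_n * 'I_n |
                  [&& p.1 \in I, p.2 \in I, (p.1 < p.2)%N & (s p.2 < s p.1)%N]]|
       * msym s (w I) else 0].

Definition Vdm (R : nzRingType) n : {mpoly R[n]} :=
  \prod_(i < n) \prod_(j < n | (i < j)%N) ('X_i - 'X_j).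

Definition zero_form (R : nzRingType) n (p : {mpoly R[n]}) : form R n :=
  [ffun I => if I == set0 then p else 0].

(* omega_{m_1,...,m_k} = d_{m_1} d_{m_2} ... d_{m_k} Delta  for ms = [:: m_1; ...; m_k] *)
Definition omega (R : nzRingType) n (ms : seq nat) : form R n :=
  foldr (fun m w => dop m w) (zero_form (Vdm R n)) ms.

From Pilot Require Import Defs.
From HB Require Import structures.
From mathcomp Require Import all_boot all_order all_algebra all_fingroup.
From mathcomp Require Import reals.
From mathcomp Require Import mpoly.
From mathcomp Require Import zify.
Set Implicit Arguments. Unset Strict Implicit. Unset Printing Implicit Defensive.
Import Order.TTheory GRing.Theory Num.Theory.
Local Open Scope ring_scope.

(* The contraction [iota(dx_j)] and the left multiplication [dx_l /\ _] anticommute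
   up to the Kronecker delta, so [delta_a d_b + d_b delta_a] is the power sum
   [sum_j d_j^(a+b)] applied coefficientwise.  Harmonicity of the coefficients is
   preserved by every [d_b], so on such forms [delta_a d_b = - d_b delta_a], and
   [delta_a omega = 0] follows by induction from the 0-form [Delta].  [Delta] is
   harmonic because [sum_j d_j^k Delta] is alternating of degree [C(n,2) - k],
   whereas a nonzero alternating polynomial only has monomials with pairwise
   distinct exponents, hence of degree at least [C(n,2)].  Finally [sigma] commutes
   with every [d_m] and [sigma Delta = sgn(sigma) Delta]. *)

Definition nbelow n (T : {set 'I_n}) (l : 'I_n) : nat := #|[set i in T | (i < l)%N]|.

Lemma nbelowU1 n (T : {set 'I_n}) j l : j \notin T ->
  nbelow (j |: T) l = ((j < l)%N + nbelow T l)%N.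
Proof.
move=> jT; rewrite /nbelow; case: ltnP => jl /=.
  have -> : [set i in j |: T | (i < l)%N] = j |: [set i in T | (i < l)%N].
    by apply/setP => i; rewrite !inE; case: eqVneq => [->|].
  by rewrite cardsU1 inE (negbTE jT).
apply: eq_card => i; rewrite !inE; case: eqVneq => [->|] //=.
by rewrite ltnNge jl andbF.
Qed.

Lemma nbelowD1 n (T : {set 'I_n}) j l : l \in T ->
  nbelow T j = ((l < j)%N + nbelow (T :\ l) j)%N.
Proof. by move=> lT; rewrite -{1}(setD1K lT) nbelowU1 // !inE eqxx. Qed.

Section Inversions.
Variables (n : nat) (s : 'S_n).

Definition ninv (I : {set 'I_n}) : nat :=
  #|[set p : 'I_n * 'I_n | [&& p.1 \in I, p.2 \in I, (p.1 < p.2)%N & (s p.2 < s p.1)%N]]|.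

Lemma ninv0 : ninv set0 = 0%N.
Proof. by apply/eqP; rewrite cards_eq0; apply/eqP/setP => p; rewrite !inE. Qed.

Lemma perm_ltnNlt (i l : 'I_n) : i != l -> (s l < s i)%N = ~~ (s i < s l)%N.
Proof. by move=> il; rewrite ltn_neqAle -leqNgt val_eqE (inj_eq perm_inj) eq_sym il. Qed.

Lemma ninvD1 (I : {set 'I_n}) l : l \in I ->
  let A := [set i in I | (i < l)%N] in let B := [set i in I | (s i < s l)%N] in
  ninv I = (ninv (I :\ l) + #|A :\: B| + #|B :\: A|)%N.
Proof.
move=> lI A B; rewrite /ninv.
set P := [set p : 'I_n * 'I_n | _].
rewrite -(cardsID [set p : 'I_n * 'I_n | (p.1 != l) && (p.2 != l)] P) -addnA.
congr (_ + _)%N.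
  apply: eq_card => -[a b]; rewrite !inE /=.
  by case: (a != l); case: (b != l); rewrite /= ?andbT ?andbF.
rewrite -(cardsID [set p : 'I_n * 'I_n | p.2 == l]).
congr (_ + _)%N.
- rewrite -[#|A :\: B|]muln1 -(cards1 l) -cardsX; apply: eq_card => -[a b].
  rewrite !inE /=; case: (eqVneq b l) => [->|]; rewrite ?andbF // lI andbT.
  rewrite andbT /=; case: (a \in I) => //=; case: ltnP => al; rewrite ?andbF //.
  by rewrite andbT perm_ltnNlt //; apply: contraTneq al => ->; rewrite ltnn.
- rewrite -[#|B :\: A|]mul1n -(cards1 l) -cardsX; apply: eq_card => -[a b].
  rewrite !inE /=; case: (eqVneq b l) => [->|bl]; first by rewrite /= !ltnn !andbF.
  case: (eqVneq a l) => [->|//]; rewrite lI /=.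
  case: (b \in I) => //=; case: (ltngtP b l) => // /val_inj eqbl.
  by rewrite eqbl eqxx in bl.
Qed.

(* The parities of the two ways of sorting [dx_(s l) /\ s (dx_(I :\ l))]. *)
Lemma odd_nbelow_ninv (I : {set 'I_n}) l : l \in I ->
  odd (nbelow (s @: I) (s l) + ninv (I :\ l)) = odd (ninv I + nbelow I l).
Proof.
move=> lI; rewrite (ninvD1 lI) /=.
set A := [set i in I | _]; set B := [set i in I | _].
have -> : nbelow (s @: I) (s l) = #|B|.
  rewrite /nbelow -(card_imset B (@perm_inj _ s)); apply: eq_card => t.
  by rewrite -[t](permKV s) inE !mem_imset ?inE //; exact: perm_inj.
rewrite /nbelow -/A -(cardsID B A) -(cardsID A B) setIC.
by rewrite -!addnA !oddD; case: odd; case: odd; case: odd; case: odd.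
Qed.

End Inversions.

Lemma bin2_size_le_sumn (s : seq nat) : uniq s -> ('C(size s, 2) <= sumn s)%N.
Proof.
move=> us; have : all (gtn (\max_(x <- s) x).+1) s.
  by apply/allP => x xs; rewrite /= ltnS (leq_bigmax_seq (F := id) _ xs).
move: (_.+1) => b; elim: b s us => [|b IH] s us sb; first by case: s us sb.
have [bs|bNs] := boolP (b \in s); last first.
  apply: IH us _; apply/allP => x xs; have := allP sb x xs.
  by rewrite /= ltnS leq_eqVlt => /orP[/eqP xb|//]; rewrite -xb xs in bNs.
have remb : all (gtn b) (rem b s).
  apply/allP => x; rewrite (mem_rem_uniq _ us) inE => /andP[xb xs].
  by have := allP sb x xs; rewrite /= ltnS leq_eqVlt (negbTE xb).
have perm_s := perm_to_rem bs; have us' := rem_uniq b us.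
rewrite (perm_size perm_s) (perm_sumn perm_s) /= binS bin1 addnC.
apply: leq_add; last exact: IH.
rewrite -[X in (_ <= X)%N](size_iota 0 b); apply: uniq_leq_size => // x /(allP remb).
by rewrite mem_iota.
Qed.

Section Forms.
Variables (R : comNzRingType) (n : nat).
Local Notation MP := {mpoly R[n]}.
Local Notation form := (Defs.form R n).
Implicit Types (p q : MP) (v w : form) (T I : {set 'I_n}).

Lemma dpowE (i : 'I_n) k p : dpow i k p = mderivm (U_(i) *+ k)%MM p.
Proof. exact/esym/mderivn_iter. Qed.

Fact dpow_is_linear (i : 'I_n) k : linear (@dpow R n i k).
Proof. by move=> c p q; rewrite !dpowE linearP. Qed.
HB.instance Definition _ (i : 'I_n) k := GRing.isLinear.Build R MP MP _ (@dpow R n i k)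
  (dpow_is_linear i k).

Lemma dpowC (i j : 'I_n) a b p : dpow i a (dpow j b p) = dpow j b (dpow i a p).
Proof. by rewrite !dpowE -!mderivmDm addmC. Qed.

Lemma dpow_dpow (i : 'I_n) a b p : dpow i a (dpow i b p) = dpow i (a + b) p.
Proof. by rewrite /dpow iterD. Qed.

Lemma mdeg_dpow_coeff d (i : 'I_n) k p m : p \is d.-homog ->
  (dpow i k p)@_m != 0 -> (mdeg m + k)%N = d.
Proof.
move=> /dhomog_nemf_coeff hp; rewrite dpowE mcoeff_mderivm.
have [<-|/hp->] := eqVneq (mdeg (U_(i) *+ k + m)%MM) d; last by rewrite mul0rn eqxx.
by rewrite mdegD mdegMn mdeg1 mul1n addnC.
Qed.

Lemma dhomog_dpow d (i : 'I_n) k p : p \is d.-homog -> dpow i k p \is (d - k).-homog.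
Proof.
move=> hp; apply/dhomogP => m; rewrite mcoeff_msupp => /(mdeg_dpow_coeff hp) <-.
by rewrite addnK.
Qed.

Lemma msym_mderiv (s : 'S_n) (i : 'I_n) p : msym s (mderiv i p) = mderiv (s i) (msym s p).
Proof.
apply/mpolyP => m; rewrite mcoeff_sym !mcoeff_deriv mcoeff_sym mnmE.
by congr (p@_ _ *+ _); apply/mnmP => j; rewrite !mnmE (inj_eq perm_inj).
Qed.

Lemma msym_dpow (s : 'S_n) (i : 'I_n) k p : msym s (dpow i k p) = dpow (s i) k (msym s p).
Proof. by elim: k => //= k IH; rewrite msym_mderiv IH. Qed.

Fact fmapf_is_linear (f : {linear MP -> MP}) : linear (fmapf f).
Proof. by move=> c v w; apply/ffunP => T; rewrite !ffunE linearP. Qed.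
HB.instance Definition _ (f : {linear MP -> MP}) :=
  GRing.isLinear.Build R form form _ (fmapf f) (fmapf_is_linear f).

Fact wedge_dx_is_linear l : linear (@wedge_dx R n l).
Proof.
move=> c v w; apply/ffunP => T; rewrite !ffunE.
by case: ifP => _; rewrite ?mulrDr ?scalerAr // scaler0 addr0.
Qed.
HB.instance Definition _ l :=
  GRing.isLinear.Build R form form _ (@wedge_dx R n l) (wedge_dx_is_linear l).

Fact contr_dx_is_linear j : linear (@contr_dx R n j).
Proof.
move=> c v w; apply/ffunP => T; rewrite !ffunE.
by case: ifP => _; rewrite ?mulrDr ?scalerAr // scaler0 addr0.
Qed.
HB.instance Definition _ j :=
  GRing.isLinear.Build R form form _ (@contr_dx R n j) (contr_dx_is_linear j).

Fact dop_is_linear m : linear (@dop R n m).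
Proof.
by move=> c v w; rewrite /dop scaler_sumr -big_split; apply: eq_bigr => l _; rewrite !linearP.
Qed.
HB.instance Definition _ m :=
  GRing.isLinear.Build R form form _ (@dop R n m) (dop_is_linear m).

Lemma wedge_dxE l w T :
  wedge_dx l w T = if l \in T then (-1) ^+ nbelow T l * w (T :\ l) else 0.
Proof. by rewrite ffunE. Qed.

Lemma contr_dxE j w T :
  contr_dx j w T = if j \in T then 0 else (-1) ^+ nbelow T j * w (j |: T).
Proof. by rewrite ffunE. Qed.

Lemma fmapf_wedge_dx (f : {additive MP -> MP}) l w :
  fmapf f (wedge_dx l w) = wedge_dx l (fmapf f w).
Proof. by apply/ffunP => T; rewrite !ffunE; case: ifP; rewrite ?raddfMsign ?raddf0 ?ffunE. Qed.

Lemma fmapf_contr_dx (f : {additive MP -> MP}) j w :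
  fmapf f (contr_dx j w) = contr_dx j (fmapf f w).
Proof. by apply/ffunP => T; rewrite !ffunE; case: ifP; rewrite ?raddfMsign ?raddf0 ?ffunE. Qed.

Lemma fmapf_dpowC (i j : 'I_n) a b w :
  fmapf (dpow i a) (fmapf (dpow j b) w) = fmapf (dpow j b) (fmapf (dpow i a) w).
Proof. by apply/ffunP => T; rewrite !ffunE dpowC. Qed.

Lemma contr_wedge_dx j l v :
  contr_dx j (wedge_dx l v) + wedge_dx l (contr_dx j v) = if j == l then v else 0.
Proof.
have sign2 k : (-1) ^+ k * (-1) ^+ k = 1 :> MP.
  by rewrite -exprD addnn -signr_odd odd_double.
apply/ffunP => T; rewrite ffunE !contr_dxE !wedge_dxE !contr_dxE.
case: (eqVneq j l) => [<-{l}|ne].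
  have [jT|jT] := boolP (j \in T); rewrite !inE eqxx /= ?add0r ?addr0 mulrA.
    by rewrite (nbelowD1 j jT) ltnn sign2 mul1r setD1K.
  by rewrite nbelowU1 // ltnn sign2 mul1r setU1K.
rewrite ffunE; have [jT|jT] := boolP (j \in T).
  by rewrite add0r !inE jT ne mulr0 if_same.
rewrite !inE [l == j]eq_sym (negbTE ne) (negbTE jT) /=.
have [lT|lT] := boolP (l \in T); last by rewrite mulr0 addr0.
have -> : (j |: T) :\ l = j |: (T :\ l).
  by apply/setP => i; rewrite !inE; case: (eqVneq i j) => [->|] /=; rewrite ?ne.
have ltn_or : ((j < l) + (l < j) = 1)%N.
  by case: ltngtP => // /val_inj eqjl; rewrite eqjl eqxx in ne.
rewrite nbelowU1 // (nbelowD1 j lT) !mulrA -!exprD.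
have -> : ((l < j) + nbelow (T :\ l) j + ((j < l) + nbelow T l) =
           (nbelow T l + nbelow (T :\ l) j).+1)%N by lia.
by rewrite exprS mulN1r mulNr addNr.
Qed.

Lemma deltaop_dop a b w :
  deltaop a (dop b w) + dop b (deltaop a w) = \sum_(j < n) fmapf (dpow j (a + b)) w.
Proof.
rewrite /deltaop /dop.
under eq_bigr => j _ do rewrite !raddf_sum.
under [X in _ + X = _]eq_bigr => l _ do rewrite !raddf_sum.
rewrite [X in _ + X = _]exchange_big -big_split; apply: eq_bigr => j _ /=.
rewrite -big_split /=.
under eq_bigr => l _ do rewrite fmapf_wedge_dx fmapf_contr_dx fmapf_dpowC contr_wedge_dx.
rewrite -big_mkcond (big_pred1 j) => [|l]; last by rewrite eq_sym.
by apply/ffunP => T; rewrite !ffunE dpow_dpow addnC.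
Qed.

Lemma dopE m w T :
  dop m w T = \sum_(l in T) (-1) ^+ nbelow T l * dpow l m (w (T :\ l)).
Proof.
rewrite /dop sum_ffunE [RHS]big_mkcond; apply: eq_bigr => l _.
by rewrite wedge_dxE ffunE.
Qed.

(* All [k >= 1], not only [k <= n] as in [Sn_harmonic]: [deltaop_dop] produces the
   power sum of order [a + b], which may exceed [n]. *)
Definition harmonic p := forall k, (0 < k)%N -> \sum_(i < n) dpow i k p = 0.

Lemma harmonic0 : harmonic 0.
Proof. by move=> k _; rewrite big1 // => i _; rewrite raddf0. Qed.

Lemma harmonic_sum (I : Type) (r : seq I) (P : pred I) (F : I -> MP) :
  (forall x, P x -> harmonic (F x)) -> harmonic (\sum_(x <- r | P x) F x).
Proof.
move=> hF k k0; under eq_bigr do rewrite raddf_sum.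
by rewrite exchange_big big1 // => x Px; apply: hF.
Qed.

Lemma harmonicMsign e p : harmonic p -> harmonic ((-1) ^+ e * p).
Proof.
by move=> hp k k0; under eq_bigr do rewrite raddfMsign; rewrite -mulr_sumr hp // mulr0.
Qed.

Lemma harmonic_dpow (l : 'I_n) m p : harmonic p -> harmonic (dpow l m p).
Proof.
by move=> hp k k0; under eq_bigr do rewrite dpowC; rewrite -raddf_sum hp // raddf0.
Qed.

Lemma harmonic_dop m w : (forall T, harmonic (w T)) -> forall T, harmonic (dop m w T).
Proof.
move=> hw T; rewrite dopE; apply: harmonic_sum => l _.
exact/harmonicMsign/harmonic_dpow.
Qed.

Lemma dop_supp m k w : (forall T, #|T| != k -> w T = 0) ->
  forall T, #|T| != k.+1 -> dop m w T = 0.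
Proof.
move=> hw T hT; rewrite dopE big1 // => l lT; rewrite hw ?raddf0 ?mulr0 //.
by apply: contra hT => /eqP cardTl; rewrite (cardsD1 l T) lT cardTl.
Qed.

Lemma dhomog_dop d m w : (forall T, w T \is d.-homog) ->
  forall T, dop m w T \is (d - m).-homog.
Proof.
move=> hw T; rewrite dopE; apply: rpred_sum => l _.
by rewrite rpredMsign dhomog_dpow.
Qed.

Definition dops (ms : seq nat) w : form := foldr (@dop R n) w ms.

Lemma dopsZ ms c w : dops ms (c *: w) = c *: dops ms w.
Proof. by elim: ms => //= m ms ->; rewrite linearZ. Qed.

Lemma dops_supp ms k w : (forall T, #|T| != k -> w T = 0) ->
  forall T, #|T| != (k + size ms)%N -> dops ms w T = 0.
Proof.
move=> hw; elim: ms => [|m ms IH] /= T; first by rewrite addn0; apply: hw.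
by rewrite addnS; apply: dop_supp.
Qed.

Lemma dhomog_dops d ms w : (forall T, w T \is d.-homog) ->
  forall T, dops ms w T \is (d - sumn ms).-homog.
Proof.
move=> hw; elim: ms => [|m ms IH] /= T; first by rewrite subn0.
by rewrite addnC subnDA; apply: dhomog_dop.
Qed.

Lemma harmonic_dops ms w : (forall T, harmonic (w T)) ->
  forall T, harmonic (dops ms w T).
Proof. by move=> hw; elim: ms => //= m ms IH; apply: harmonic_dop. Qed.

Lemma deltaop_dops ms w : all (fun m => 0 < m)%N ms ->
  (forall T, harmonic (w T)) -> (forall a, deltaop a w = 0) ->
  forall a, deltaop a (dops ms w) = 0.
Proof.
move=> + hw hw0; elim: ms => //= m ms IH /andP[m_gt0 /IH{}IH] a.
have := deltaop_dop a m (dops ms w); rewrite IH raddf0 addr0 => ->.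
apply/ffunP => T; rewrite sum_ffunE ffunE; under eq_bigr do rewrite ffunE.
by apply: harmonic_dops; rewrite ?addn_gt0 ?m_gt0 ?orbT.
Qed.

Lemma zero_form_coef (P : MP -> Prop) p : P p -> P 0 -> forall T, P (zero_form p T).
Proof. by move=> Pp P0 T; rewrite ffunE; case: ifP. Qed.

Lemma zero_formZ c p : zero_form (c *: p) = c *: zero_form p.
Proof. by apply/ffunP => T; rewrite !ffunE; case: ifP; rewrite ?scaler0. Qed.

Lemma zero_form_supp p T : #|T| != 0%N -> zero_form p T = 0.
Proof. by rewrite ffunE cards_eq0 => /negbTE ->. Qed.

Lemma deltaop_zero_form a p : deltaop a (zero_form p) = 0.
Proof.
rewrite /deltaop big1 // => j _; apply/ffunP => T; rewrite contr_dxE !ffunE.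
case: ifP => // _; have /negbTE-> : j |: T != set0 by apply/set0Pn; exists j; rewrite setU11.
by rewrite raddf0 mulr0.
Qed.

Section Action.
Variable s : 'S_n.

Lemma act_formE w T :
  act_form s w T = (-1) ^+ ninv s (s @^-1: T) * msym s (w (s @^-1: T)).
Proof.
have imsetE I : s @: I = (s^-1)%g @^-1: I := can_imset_pre I (permK s).
rewrite /act_form sum_ffunE (bigD1 (s @^-1: T)) //= ffunE.
have -> : T == s @: (s @^-1: T).
  by apply/eqP/setP => t; rewrite imsetE !inE permKV.
rewrite big1 ?addr0 // => I neI; rewrite ffunE; case: eqP => // TE.
by case/eqP: neI; apply/setP => i; rewrite TE imsetE !inE permK.
Qed.

Fact act_form_is_linear : linear (@act_form R n s).
Proof.
move=> c v w; apply/ffunP => T.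
by rewrite !ffunE !act_formE !ffunE msymD msymZ mulrDr scalerAr.
Qed.
HB.instance Definition _ :=
  GRing.isLinear.Build R form form _ (@act_form R n s) act_form_is_linear.

Lemma fmapf_dpow_act l k w :
  fmapf (dpow (s l) k) (act_form s w) = act_form s (fmapf (dpow l k) w).
Proof. by apply/ffunP => T; rewrite ffunE !act_formE ffunE raddfMsign msym_dpow. Qed.

Lemma wedge_dx_act l w : wedge_dx (s l) (act_form s w) = act_form s (wedge_dx l w).
Proof.
apply/ffunP => T; rewrite wedge_dxE !act_formE wedge_dxE inE.
case: ifP => lT; last by rewrite msym0 mulr0.
have -> : s @^-1: (T :\ s l) = (s @^-1: T) :\ l.
  by apply/setP => i; rewrite !inE (inj_eq perm_inj).
have TE : T = s @: (s @^-1: T).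
  by apply/setP => t; rewrite (can_imset_pre _ (permK s)) !inE permKV.
rewrite raddfMsign !mulrA -!exprD -signr_odd {1}TE odd_nbelow_ninv ?inE //.
by rewrite signr_odd.
Qed.

Lemma dop_act m w : dop m (act_form s w) = act_form s (dop m w).
Proof.
rewrite /dop raddf_sum (reindex_inj (@perm_inj _ s)); apply: eq_bigr => l _ /=.
by rewrite fmapf_dpow_act wedge_dx_act.
Qed.

Lemma dops_act ms w : dops ms (act_form s w) = act_form s (dops ms w).
Proof. by elim: ms => //= m ms ->; rewrite dop_act. Qed.

Lemma act_zero_form p : act_form s (zero_form p) = zero_form (msym s p).
Proof.
apply/ffunP => T; rewrite act_formE !ffunE.
have -> : (T == set0) = (s @^-1: T == set0).
  by rewrite -!cards_eq0 card_preimset //; exact: perm_inj.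
case: eqVneq => [->|_]; first by rewrite ninv0 mul1r.
by rewrite msym0 mulr0.
Qed.

End Action.

End Forms.

Definition alternating (R : nzRingType) n (p : {mpoly R[n]}) :=
  forall s : 'S_n, msym s p = (-1) ^+ odd_perm s *: p.

Section Alternating.
Variables (R : numDomainType) (n : nat).
Implicit Types (p : {mpoly R[n]}) (m : 'X_{1..n}).

Lemma alternating_coef_inj p m : alternating p -> p@_m != 0 -> injective m.
Proof.
move=> altp pm0 i j mij; apply/eqP; apply: contraNT pm0 => neij.
have := congr1 (mcoeff m) (altp (tperm i j)).
rewrite mcoeff_sym mcoeffZ odd_tperm neij expr1 mulN1r.
have -> : [multinom m (tperm i j k) | k < n] = m.
  by apply/mnmP => k; rewrite mnmE; case: tpermP => // ->.
by move/eqP; rewrite -addr_eq0 -mulr2n mulrn_eq0.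
Qed.

Lemma alternating_mdeg p m : alternating p -> p@_m != 0 -> ('C(n, 2) <= mdeg m)%N.
Proof.
move=> altp pm0; have := bin2_size_le_sumn (_ : uniq (map m (enum 'I_n))).
rewrite size_map size_enum_ord sumnE big_map big_enum /= -mdegE; apply.
by rewrite (map_inj_uniq (alternating_coef_inj altp pm0)) enum_uniq.
Qed.

Lemma alternating_harmonic p : alternating p -> p \is 'C(n, 2).-homog -> harmonic p.
Proof.
move=> altp homp k k_gt0; set q := \sum_(i < n) dpow i k p.
have altq : alternating q.
  move=> s; rewrite /q raddf_sum /=; under eq_bigr do rewrite msym_dpow altp linearZ.
  by rewrite -scaler_sumr [in RHS](reindex_inj (@perm_inj _ s)).
apply/mpolyP => m; rewrite mcoeff0; apply/eqP/negP => /negP qm0.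
have [i pim0] : exists i, (dpow i k p)@_m != 0.
  apply/existsP; apply: contraNT qm0 => /existsPn pm0.
  by rewrite /q raddf_sum big1 // => i _; apply/eqP/negPn/pm0.
have := alternating_mdeg altq qm0; have := mdeg_dpow_coeff homp pim0; lia.
Qed.

End Alternating.

Section Vandermonde.
Variables (R : comNzRingType) (n : nat).
Local Notation V := (Vandermonde n (\row_(j < n) (- 'X_j : {mpoly R[n]}))).

Lemma Vdm_det : Vdm R n = \det V.
Proof.
rewrite det_Vandermonde; apply: eq_bigr => i _; apply: eq_bigr => j _.
by rewrite !mxE opprK addrC.
Qed.

Lemma msymX1 (s : 'S_n) (i : 'I_n) : msym s ('X_i : {mpoly R[n]}) = 'X_(s i).
Proof. by rewrite /msym mmapX mmap1U. Qed.

Lemma Vdm_alternating : alternating (Vdm R n).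
Proof.
move=> s; rewrite Vdm_det -det_map_mx.
have -> : map_mx (msym s) V = col_perm s V.
  by apply/matrixP => i j; rewrite !mxE rmorphXn rmorphN -msymX1.
by rewrite col_permE det_mulmx det_perm odd_permV mulrC mulr_sign scaler_sign.
Qed.

Lemma card_ltn_pairs : (\sum_(i < n) \sum_(j < n | (i < j)%N) 1 = 'C(n, 2))%N.
Proof.
rewrite (exchange_big_dep xpredT) //= -bin2_sum big_mkord; apply: eq_bigr => j _.
rewrite -(big_mkord (fun i => i < j)%N (fun _ => 1%N)).
rewrite -(big_nat_widen 0 j n xpredT) ?(ltnW (ltn_ord j)) //.
by rewrite sum_nat_const_nat subn0 muln1.
Qed.

Lemma Vdm_homog : Vdm R n \is 'C(n, 2).-homog.
Proof.
rewrite -card_ltn_pairs.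
apply: (big_ind2 (fun p d => p \is d.-homog)) => [|p d q e|i _]; first exact: dhomog1.
  exact: dhomogM.
apply: (big_ind2 (fun p d => p \is d.-homog)) => [|p d q e|j _]; first exact: dhomog1.
  exact: dhomogM.
by apply: rpredB; rewrite dhomogX /= mdeg1.
Qed.

End Vandermonde.

Theorem lemma10 (R : realType) (n : nat) (ms : seq nat) :
  sorted (fun a b => (b < a)%N) ms ->
  all (fun m => (1 <= m <= n.-1)%N) ms ->
  in_H ('C(n, 2) - sumn ms)%N (size ms) (omega R n ms) /\
  (forall s : 'S_n,
     act_form s (omega R n ms) = ((-1) ^+ odd_perm s) *: omega R n ms).
Proof.
move=> _ ms_bounded.
have ms_gt0 : all (fun m => 0 < m)%N ms by apply: sub_all ms_bounded => m /andP[].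
have -> : omega R n ms = dops ms (zero_form (Vdm R n)) by [].
have Vdm_harmonic := alternating_harmonic (@Vdm_alternating R n) (@Vdm_homog R n).
have coef_harmonic := zero_form_coef Vdm_harmonic (@harmonic0 R n).
have coef_homog := zero_form_coef (P := fun p => p \is 'C(n, 2).-homog)
  (@Vdm_homog R n) (rpred0 _).
split; first split.
- by move=> T hT; apply: (dops_supp (zero_form_supp _)); rewrite add0n.
- move=> T; split; first by move=> k /andP[k_gt0 _]; apply: harmonic_dops.
  exact: dhomog_dops.
- by move=> j _; apply: deltaop_dops => // a; apply: deltaop_zero_form.
- by move=> s; rewrite -dops_act act_zero_form Vdm_alternating zero_formZ dopsZ.
Qed.
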